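(* Let $m,n\ge1$, $a\in(0,\infty)^m$, $b\in(0,\infty)^n$, and let $\Omega$ be a real $m\times n$ matrix. The operators $T_1,T_2$ map the interior of $\tilde{\mathcal A}$ into the interior of $\tilde{\mathcal A}$. Moreover, for $(A,B)$ in the interior of $\tilde{\mathcal A}$, letting $\tilde{\mathcal A}_{(-,B)}=\{(A',B)\in\tilde{\mathcal A}\}$ and $\tilde{\mathcal A}_{(A,-)}=\{(A,B')\in\tilde{\mathcal A}\}$: (1) $T_1(A,B)$ is the unique point of $\tilde{\mathcal A}_{(-,B)}$ attaining $\sup_{(A',B)\in\tilde{\mathcal A}_{(-,B)}}F(A',B)$; (2) $T_2(A,B)$ is the unique point of $\tilde{\mathcal A}_{(A,-)}$ attaining $\sup_{(A,B')\in\tilde{\mathcal A}_{(A,-)}}F(A,B')$.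
   Context: $\mathcal A$ is the set of pairs $(A,B)$ of $(m+1)\times(n+1)$ real matrices (indices $i=0,\dots,m$, $j=0,\dots,n$) with: $A_{ij},B_{ij}\ge0$; $a_i=\sum_{j=0}^nA_{ij}$ for $i=1,\dots,m$; $A_{0j}=0$ for all $j$; $b_j=\sum_{i=0}^mB_{ij}$ for $j=1,\dots,n$; $B_{i0}=0$ for all $i$. $F(A,B)=\sum_{i=1}^m\sum_{j=1}^n\sqrt{A_{ij}B_{ij}}\,\Omega_{ij}$. $\tilde{\mathcal A}\subset\mathcal A$ consists of those $(A,B)$ with: (1) $A_{ij}=B_{ij}=0$ whenever $i,j\ge1$ and $\Omega_{ij}\le0$; (2) for $j\ge1$, $B_{0j}=0$ if there is $i\ge1$ with $\Omega_{ij}>0$; (3) for $i\ge1$, $A_{i0}=0$ if there is $j\ge1$ with $\Omega_{ij}>0$. $T_1(A,B)=(E,B)$ where $E_{ij}=A_{ij}$ if $i=0$ or $j=0$, and otherwise $E_{ij}=a_iB_{ij}\Omega_{ij}^2/\sum_{k=1}^nB_{ik}\Omega_{ik}^2$ if this denominator is positive and $0$ otherwise. $T_2(A,B)=(A,E)$ where $E_{ij}=B_{ij}$ if $i=0$ or $j=0$, and otherwise $E_{ij}=b_jA_{ij}\Omega_{ij}^2/\sum_{k=1}^mA_{kj}\Omega_{kj}^2$ if this denominator is positive and $0$ otherwise. ''Interior'' refers to the interior of the convex set $\tilde{\mathcal A}$ relative to the affine space it spans. *)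

(* Scalars: an arbitrary real closed field R (Num.sqrt needs rcfType). *)
From HB Require Import structures.
From mathcomp Require Import all_boot all_order all_algebra.
Set Implicit Arguments. Unset Strict Implicit. Unset Printing Implicit Defensive.
Import Order.TTheory GRing.Theory Num.Theory.
Local Open Scope ring_scope.

Section Defs.
Variables (R : rcfType) (m n : nat).

(* Pairs (A,B) of (m+1)x(n+1) matrices; row/column index 0 is ord0,
   index i >= 1 is  lift ord0 i'  with i' : 'I_m (paper's i = i'+1). *)
Definition mxpair := ('M[R]_(m.+1, n.+1) * 'M[R]_(m.+1, n.+1))%type.

Definition ri (i : 'I_m) : 'I_m.+1 := lift ord0 i.
Definition cj (j : 'I_n) : 'I_n.+1 := lift ord0 j.

Definition inA (a : 'I_m -> R) (b : 'I_n -> R) (P : mxpair) : Prop :=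
  let A := P.1 in let B := P.2 in
  [/\ (forall i j, 0 <= A i j /\ 0 <= B i j),
      (forall i : 'I_m, a i = \sum_(j < n.+1) A (ri i) j),
      (forall j, A ord0 j = 0),
      (forall j : 'I_n, b j = \sum_(i < m.+1) B i (cj j)) &
      (forall i, B i ord0 = 0)].

Definition inAt (a : 'I_m -> R) (b : 'I_n -> R) (Om : 'M[R]_(m, n))
    (P : mxpair) : Prop :=
  let A := P.1 in let B := P.2 in
  [/\ inA a b P,
      (forall i j, Om i j <= 0 -> A (ri i) (cj j) = 0 /\ B (ri i) (cj j) = 0),
      (forall j, (exists i, 0 < Om i j) -> B ord0 (cj j) = 0) &
      (forall i, (exists j, 0 < Om i j) -> A (ri i) ord0 = 0)].

Definition Fobj (Om : 'M[R]_(m, n)) (P : mxpair) : R :=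
  \sum_(i < m) \sum_(j < n) Num.sqrt (P.1 (ri i) (cj j) * P.2 (ri i) (cj j)) * Om i j.

Definition T1 (a : 'I_m -> R) (Om : 'M[R]_(m, n)) (P : mxpair) : mxpair :=
  let A := P.1 in let B := P.2 in
  (\matrix_(i < m.+1, j < n.+1)
     match unlift ord0 i, unlift ord0 j with
     | Some i', Some j' =>
         let d := \sum_(k < n) B i (cj k) * Om i' k ^+ 2 in
         if 0 < d then a i' * B i j * Om i' j' ^+ 2 / d else 0
     | _, _ => A i j
     end, B).

Definition T2 (b : 'I_n -> R) (Om : 'M[R]_(m, n)) (P : mxpair) : mxpair :=
  let A := P.1 in let B := P.2 in
  (A, \matrix_(i < m.+1, j < n.+1)
     match unlift ord0 i, unlift ord0 j with
     | Some i', Some j' =>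
         let d := \sum_(k < m) A (ri k) j * Om k j' ^+ 2 in
         if 0 < d then b j' * A i j * Om i' j' ^+ 2 / d else 0
     | _, _ => B i j
     end).

Definition affhull (S : mxpair -> Prop) (Y : mxpair) : Prop :=
  exists (k : nat) (p : 'I_k -> mxpair) (w : 'I_k -> R),
    [/\ (forall l, S (p l)), \sum_(l < k) w l = 1,
        Y.1 = \sum_(l < k) w l *: (p l).1 &
        Y.2 = \sum_(l < k) w l *: (p l).2].

Definition relint (S : mxpair -> Prop) (X : mxpair) : Prop :=
  S X /\ exists eps : R, 0 < eps /\
    forall Y, affhull S Y ->
      (forall i j, `|Y.1 i j - X.1 i j| < eps /\ `|Y.2 i j - X.2 i j| < eps) ->
      S Y.

Definition unique_argmax (S : mxpair -> Prop) (f : mxpair -> R) (X : mxpair) : Prop :=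
  [/\ S X, (forall Y, S Y -> f Y <= f X) & (forall Y, S Y -> f X <= f Y -> Y = X)].

End Defs.

From HB Require Import structures.
From mathcomp Require Import all_boot all_order all_algebra.
From mathcomp Require Import ring lra.
Set Implicit Arguments. Unset Strict Implicit. Unset Printing Implicit Defensive.
Import Order.TTheory GRing.Theory Num.Theory.
Local Open Scope ring_scope.

(* The constraints of Ã on A and on B are independent, and the transposition
   (A, B, a, b, Ω) ↦ (Bᵀ, Aᵀ, b, a, Ωᵀ) preserves Ã and F and exchanges T1 and
   T2, so only T1 needs to be studied.
   A point of Ã is in the relative interior iff its entries on the support
   {Ω > 0} are positive: near such a point every entry not forced by the affine
   constraints stays nonnegative, and conversely a relative-interior point can be
   pushed slightly beyond itself away from a point of Ã that is positive on the
   support.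
   For fixed B, F splits into one problem per row i: maximise
   Σ_j √x_j q_j with q_j = √B_ij Ω_ij ≥ 0 under Σ_j x_j = const.  Summing the
   AM-GM inequalities √x_j (c q_j) ≤ (x_j + c² q_j²) / 2 shows that the maximum is
   attained exactly at x_j = c² q_j², which is the first component of T1. *)

Lemma sum_sqrt_mul_leif (R : rcfType) (J : finType) (x q : J -> R) (c : R) :
    0 < c -> (forall j, 0 <= x j) -> \sum_j x j = \sum_j (c * q j) ^+ 2 ->
  \sum_j Num.sqrt (x j) * q j <= c * \sum_j q j ^+ 2
    ?= iff [forall j, Num.sqrt (x j) == c * q j].
Proof.
move=> c_gt0 x_ge0 sum_x.
rewrite -(mono_leif (ler_pM2l c_gt0)).
have := leif_sum (fun j (_ : true) => leif_mean_square (Num.sqrt (x j)) (c * q j)).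
congr (_ <= _ ?= iff _).
- by rewrite mulr_sumr; apply: eq_bigr => j _; rewrite mulrCA.
- have sum_cq : \sum_j (c * q j) ^+ 2 = c * (c * \sum_j q j ^+ 2).
    by rewrite mulrA -expr2 mulr_sumr; apply: eq_bigr => j _; rewrite exprMn.
  rewrite -mulr_suml big_split /=.
  under eq_bigr do rewrite sqr_sqrtr //.
  by rewrite sum_x sum_cq; field.
Qed.

Lemma exists_pos_lbound (R : realDomainType) (T : finType) (f : T -> R) :
  (forall t, 0 < f t) -> exists2 e, 0 < e & forall t, e <= f t.
Proof.
move=> f_gt0; exists (\big[Num.min/1]_t f t).
  by apply: (big_ind (fun x => 0 < x)) => // x y; rewrite lt_min => -> ->.
by move=> t; rewrite (bigD1 t) //= ge_min lexx.
Qed.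

Lemma relint_extend (R : rcfType) (m n : nat) (S : mxpair R m n -> Prop) P Q :
    relint S P -> S Q ->
  exists2 s : R, 0 < s & S ((1 + s) *: P.1 - s *: Q.1, (1 + s) *: P.2 - s *: Q.2).
Proof.
case=> SP [e [e_gt0 near_in]] SQ.
pose dist1 (t : 'I_m.+1 * 'I_n.+1) := `|P.1 t.1 t.2 - Q.1 t.1 t.2|.
pose dist2 (t : 'I_m.+1 * 'I_n.+1) := `|P.2 t.1 t.2 - Q.2 t.1 t.2|.
have d_gt0 t : 0 < 1 + dist1 t + dist2 t.
  have : 0 <= dist1 t /\ 0 <= dist2 t by split; apply: normr_ge0.
  by case; lra.
have [s s_gt0 s_le] := exists_pos_lbound (fun t => divr_gt0 e_gt0 (d_gt0 t)).
exists s => //; apply: near_in.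
  exists 2%N, (fun l : 'I_2 => if l == ord0 then P else Q),
    (fun l : 'I_2 => if l == ord0 then 1 + s else - s).
  split; [by move=> l; case: ifP | ..]; rewrite big_ord_recl big_ord1 /=.
  - by rewrite addrK.
  - by rewrite scaleNr.
  - by rewrite scaleNr.
move=> i j; have := s_le (i, j); rewrite ler_pdivlMr ?d_gt0 // /dist1 /dist2 /= => sd_le.
have shift x y : (1 + s) * x - s * y - x = s * (x - y) by ring.
rewrite !mxE !shift !normrM (gtr0_norm s_gt0).
have := mulr_ge0 (ltW s_gt0) (normr_ge0 (P.1 i j - Q.1 i j)).
have := mulr_ge0 (ltW s_gt0) (normr_ge0 (P.2 i j - Q.2 i j)).
split; nra.
Qed.

Definition trpair (R : rcfType) (m n : nat) (P : mxpair R m n) : mxpair R n m :=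
  (P.2^T, P.1^T).

Lemma trpairK (R : rcfType) (m n : nat) (P : mxpair R m n) : trpair (trpair P) = P.
Proof. by case: P => A B; rewrite /trpair /= !trmxK. Qed.

Lemma unique_argmax_trpair (R : rcfType) (m n : nat)
    (S : mxpair R n m -> Prop) (S' : mxpair R m n -> Prop) F F' X :
    (forall Q, S' Q <-> S (trpair Q)) -> (forall Q, F' Q = F (trpair Q)) ->
  unique_argmax S F X -> unique_argmax S' F' (trpair X).
Proof.
move=> SE FE [SX X_max X_uniq]; split.
- by apply/SE; rewrite trpairK.
- by move=> Q /SE SQ; rewrite !FE trpairK; apply: X_max.
- move=> Q /SE SQ; rewrite !FE trpairK => le_XQ.
  by rewrite -(X_uniq _ SQ le_XQ) trpairK.
Qed.

Section RowProblem.
Variables (R : rcfType) (m n : nat) (a : 'I_m -> R) (Om : 'M[R]_(m, n)).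

(* The constraints of Ã on A alone; B is constrained by [row_feasible b Om^T B^T]. *)
Definition row_affine (A : 'M[R]_(m.+1, n.+1)) : Prop :=
  [/\ (forall i, a i = \sum_j A (ri i) j), (forall j, A ord0 j = 0),
      (forall i j, Om i j <= 0 -> A (ri i) (cj j) = 0) &
      (forall i, (exists j, 0 < Om i j) -> A (ri i) ord0 = 0)].

Definition row_feasible (A : 'M[R]_(m.+1, n.+1)) : Prop :=
  (forall i j, 0 <= A i j) /\ row_affine A.

Definition row_interior (A : 'M[R]_(m.+1, n.+1)) : Prop :=
  row_feasible A /\ forall i j, 0 < Om i j -> 0 < A (ri i) (cj j).

Definition inner_support (B : 'M[R]_(m.+1, n.+1)) : Prop :=
  forall i j, [/\ 0 <= B (ri i) (cj j), Om i j <= 0 -> B (ri i) (cj j) = 0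
                & 0 < Om i j -> 0 < B (ri i) (cj j)].

Lemma row_affine_corner A : row_affine A ->
  forall i, A (ri i) ord0 = if [exists j, 0 < Om i j] then 0 else a i.
Proof.
case=> row_sum _ zero_neg zero_corner i.
case: ifPn => [/existsP [j Om_ij] | /existsPn no_pos].
  by apply: zero_corner; exists j.
rewrite row_sum big_ord_recl big1 ?addr0 // => j _.
by apply: zero_neg; rewrite leNgt no_pos.
Qed.

Lemma row_affine_inner_sum A : row_affine A ->
  forall i, \sum_j A (ri i) (cj j) = if [exists j, 0 < Om i j] then a i else 0.
Proof.
move=> hA i; have [row_sum _ _ _] := hA.
have := row_sum i; rewrite big_ord_recl (row_affine_corner hA).
by case: ifP => _; lra.
Qed.

Lemma row_affine_combination k (p : 'I_k -> 'M[R]_(m.+1, n.+1)) (w : 'I_k -> R) :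
  \sum_l w l = 1 -> (forall l, row_affine (p l)) -> row_affine (\sum_l w l *: p l).
Proof.
move=> w_sum hp.
have entry i j : (\sum_l w l *: p l) i j = \sum_l w l * p l i j.
  by rewrite summxE; apply: eq_bigr => l _; rewrite mxE.
have comb0 i j : (forall l, p l i j = 0) -> (\sum_l w l *: p l) i j = 0.
  by move=> h; rewrite entry big1 // => l _; rewrite h mulr0.
split.
- move=> i; under eq_bigr do rewrite entry.
  rewrite exchange_big /= -[LHS]mul1r -w_sum mulr_suml.
  apply: eq_bigr => l _; have [row_sum _ _ _] := hp l.
  by rewrite row_sum mulr_sumr.
- by move=> j; apply: comb0 => l; case: (hp l).
- move=> i j Om_le0; apply: comb0 => l.
  by case: (hp l) => _ _ zero_neg _; apply: zero_neg.
- move=> i pos; apply: comb0 => l.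
  by case: (hp l) => _ _ _ zero_corner; apply: zero_corner.
Qed.

Lemma row_feasible_of_inner A : (forall i, 0 <= a i) -> row_affine A ->
  (forall i j, 0 < Om i j -> 0 <= A (ri i) (cj j)) -> row_feasible A.
Proof.
move=> a_ge0 hA inner_ge0; split=> // i j; have [_ row0 zero_neg _] := hA.
case: (unliftP ord0 i) => [i'|] ->; last by rewrite row0.
case: (unliftP ord0 j) => [j'|] ->.
  by case: (leP (Om i' j') 0) => Om_ij; [rewrite (zero_neg i' j') | apply: inner_ge0].
by rewrite (row_affine_corner hA); case: ifP.
Qed.

Lemma row_interior_open A : (forall i, 0 <= a i) -> row_interior A ->
  exists2 e : R, 0 < e & forall Y, row_affine Y ->
    (forall i j, `|Y i j - A i j| < e) -> row_feasible Y.
Proof.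
move=> a_ge0 [_ A_pos].
pose f (t : 'I_m * 'I_n) := if 0 < Om t.1 t.2 then A (ri t.1) (cj t.2) else 1.
have [e e_gt0 e_le] : exists2 e, 0 < e & forall t, e <= f t.
  by apply: exists_pos_lbound => -[i j]; rewrite /f /=; case: ifP => // /A_pos.
exists e => // Y hY near_A; apply: row_feasible_of_inner => // i j Om_ij.
have := e_le (i, j); rewrite /f /= Om_ij => e_le_A.
have := near_A (ri i) (cj j); rewrite ltr_distl => /andP [lo _]; lra.
Qed.

Lemma row_interior_extend A A' s : 0 < s -> row_feasible A -> row_interior A' ->
  row_feasible ((1 + s) *: A - s *: A') -> row_interior A.
Proof.
move=> s_gt0 hA [_ A'_pos] [ext_ge0 _]; split=> // i j Om_ij.
have := ext_ge0 (ri i) (cj j); rewrite !mxE => ext_ij.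
have := mulr_gt0 s_gt0 (A'_pos i j Om_ij) => sA'_gt0.
have s1_gt0 : 0 < 1 + s by lra.
by rewrite -(pmulr_rgt0 _ s1_gt0); lra.
Qed.

Lemma row_interior_support A : row_interior A -> inner_support A.
Proof.
by case=> -[A_ge0 [_ _ zero_neg _]] A_pos i j; split; [ | exact: zero_neg | exact: A_pos].
Qed.

Section BestReply.
Variable B : 'M[R]_(m.+1, n.+1).
Hypotheses (a_gt0 : forall i, 0 < a i) (B_supp : inner_support B).

Definition row_mass i := \sum_k B (ri i) (cj k) * Om i k ^+ 2.

Definition best_reply i j :=
  if 0 < row_mass i then a i * B (ri i) (cj j) * Om i j ^+ 2 / row_mass i else 0.

(* The value on a row of zero mass is irrelevant: all its weights vanish. *)
Definition row_scale i := if 0 < row_mass i then Num.sqrt (a i / row_mass i) else 1.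

Definition sqrt_weight i j := Num.sqrt (B (ri i) (cj j)) * Om i j.

Let B_ge0 i j : 0 <= B (ri i) (cj j). Proof. by case: (B_supp i j). Qed.

Lemma row_mass_ge0 i : 0 <= row_mass i.
Proof. by apply: sumr_ge0 => k _; rewrite mulr_ge0 ?sqr_ge0. Qed.

Lemma row_mass_gt0 i j : 0 < Om i j -> 0 < row_mass i.
Proof.
move=> Om_ij; have [_ _ /(_ Om_ij) B_ij] := B_supp i j.
rewrite /row_mass (bigD1 j) //=.
have rest_ge0 : 0 <= \sum_(k | k != j) B (ri i) (cj k) * Om i k ^+ 2.
  by apply: sumr_ge0 => k _; rewrite mulr_ge0 ?sqr_ge0.
have : 0 < B (ri i) (cj j) * Om i j ^+ 2 by rewrite mulr_gt0 ?exprn_gt0.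
lra.
Qed.

Lemma best_reply_ge0 i j : 0 <= best_reply i j.
Proof.
rewrite /best_reply; case: ifP => // mass_gt0.
rewrite divr_ge0 ?(ltW mass_gt0) // mulr_ge0 ?sqr_ge0 //.
by rewrite mulr_ge0 ?B_ge0 ?(ltW (a_gt0 i)).
Qed.

Lemma best_reply_eq0 i j : Om i j <= 0 -> best_reply i j = 0.
Proof.
case: (B_supp i j) => _ zero_neg _ /zero_neg B_ij.
by rewrite /best_reply B_ij !(mulr0, mul0r) if_same.
Qed.

Lemma best_reply_gt0 i j : 0 < Om i j -> 0 < best_reply i j.
Proof.
move=> Om_ij; have [_ _ /(_ Om_ij) B_ij] := B_supp i j.
have mass_gt0 := row_mass_gt0 Om_ij.
by rewrite /best_reply mass_gt0 divr_gt0 ?mulr_gt0 ?exprn_gt0.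
Qed.

Lemma best_reply_sum i :
  \sum_j best_reply i j = if [exists j, 0 < Om i j] then a i else 0.
Proof.
case: ifPn => [/existsP [j Om_ij] | /existsPn no_pos].
  have mass_gt0 := row_mass_gt0 Om_ij.
  transitivity (\sum_j a i / row_mass i * (B (ri i) (cj j) * Om i j ^+ 2)).
    by apply: eq_bigr => k _; rewrite /best_reply mass_gt0; ring.
  by rewrite -mulr_sumr -/(row_mass i) divfK ?gt_eqF.
by apply: big1 => j _; apply: best_reply_eq0; rewrite leNgt no_pos.
Qed.

Lemma row_scale_gt0 i : 0 < row_scale i.
Proof. by rewrite /row_scale; case: ifP => // mass_gt0; rewrite sqrtr_gt0 divr_gt0. Qed.

Lemma sqrt_weight_ge0 i j : 0 <= sqrt_weight i j.
Proof.
rewrite /sqrt_weight; case: (leP (Om i j) 0) => Om_ij.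
  by case: (B_supp i j) => _ /(_ Om_ij) -> _; rewrite sqrtr0 mul0r.
by rewrite mulr_ge0 ?sqrtr_ge0 ?ltW.
Qed.

Lemma best_replyE i j : best_reply i j = (row_scale i * sqrt_weight i j) ^+ 2.
Proof.
rewrite /best_reply /row_scale /sqrt_weight !exprMn; case: ifPn => mass_gt0.
  by rewrite !sqr_sqrtr ?B_ge0 ?divr_ge0 ?(ltW mass_gt0) ?(ltW (a_gt0 i)) //; ring.
have mass0 : row_mass i = 0 by apply/eqP; rewrite eq_le row_mass_ge0 leNgt mass_gt0.
have := psumr_eq0P (fun k _ => mulr_ge0 (B_ge0 i k) (sqr_ge0 (Om i k))) mass0 isT.
by rewrite expr1n mul1r sqr_sqrtr // => ->.
Qed.

Lemma sqrt_best_reply i j : Num.sqrt (best_reply i j) = row_scale i * sqrt_weight i j.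
Proof.
rewrite best_replyE sqrtr_sqr ger0_norm //.
by rewrite mulr_ge0 ?sqrt_weight_ge0 ?ltW ?row_scale_gt0.
Qed.

End BestReply.

Lemma T1_inner P i j : (T1 a Om P).1 (ri i) (cj j) = best_reply P.2 i j.
Proof. by rewrite /= mxE /ri /cj !liftK. Qed.

Lemma T1_row0 P j : (T1 a Om P).1 ord0 j = P.1 ord0 j.
Proof. by rewrite /= mxE unlift_none. Qed.

Lemma T1_col0 P i : (T1 a Om P).1 i ord0 = P.1 i ord0.
Proof. by rewrite /= mxE unlift_none; case: unlift. Qed.

Lemma T1_row_interior P : (forall i, 0 < a i) -> row_feasible P.1 ->
  inner_support P.2 -> row_interior (T1 a Om P).1.
Proof.
move=> a_gt0 [A_ge0 hA] B_supp; have [_ row0 _ zero_corner] := hA.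
split; [split; [|split] |].
- move=> i j; case: (unliftP ord0 i) => [i'|] ->; last by rewrite T1_row0.
  case: (unliftP ord0 j) => [j'|] ->; last by rewrite T1_col0.
  by rewrite (T1_inner P i' j') best_reply_ge0.
- move=> i; rewrite big_ord_recl T1_col0 (row_affine_corner hA).
  under eq_bigr do rewrite T1_inner.
  by rewrite best_reply_sum //; case: ifP; rewrite ?add0r ?addr0.
- by move=> j; rewrite T1_row0.
- by move=> i j Om_ij; rewrite T1_inner best_reply_eq0.
- by move=> i pos; rewrite T1_col0 zero_corner.
- by move=> i j Om_ij; rewrite T1_inner best_reply_gt0.
Qed.

Lemma exists_row_interior A : (forall i, 0 < a i) -> row_feasible A ->
  exists A', row_interior A'.
Proof.
move=> a_gt0 hA.
pose S : 'M[R]_(m.+1, n.+1) := \matrix_(i, j)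
  match unlift ord0 i, unlift ord0 j with
  | Some i', Some j' => if 0 < Om i' j' then 1 else 0
  | _, _ => 0
  end.
have S_supp : inner_support S.
  move=> i j; rewrite mxE /ri /cj !liftK.
  case: ifPn => Om_ij; split=> //; rewrite ?ler01 ?ltr01 // => Om_le0.
  by move: Om_ij; rewrite ltNge Om_le0.
by exists (T1 a Om (A, S)).1; apply: T1_row_interior.
Qed.

Lemma Fobj_T1_leif P A : (forall i, 0 < a i) -> row_feasible P.1 ->
    inner_support P.2 -> row_feasible A ->
  Fobj Om (A, P.2) <= Fobj Om (T1 a Om P) ?= iff (A == (T1 a Om P).1).
Proof.
move=> a_gt0 hP1 B_supp [A_ge0 hA].
have [[T_ge0 hT] _] := T1_row_interior a_gt0 hP1 B_supp.
set c := row_scale P.2; set q := sqrt_weight P.2.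
have sqrtT i j : Num.sqrt ((T1 a Om P).1 (ri i) (cj j)) = c i * q i j.
  by rewrite T1_inner sqrt_best_reply.
have -> : Fobj Om (A, P.2) = \sum_i \sum_j Num.sqrt (A (ri i) (cj j)) * q i j.
  by apply: eq_bigr => i _; apply: eq_bigr => j _; rewrite /= sqrtrM // mulrA.
have -> : Fobj Om (T1 a Om P) = \sum_i c i * \sum_j q i j ^+ 2.
  apply: eq_bigr => i _; rewrite mulr_sumr; apply: eq_bigr => j _.
  by rewrite sqrtrM ?T_ge0 // -mulrA sqrtT -mulrA expr2.
have -> : (A == (T1 a Om P).1) =
    [forall i, [forall j, Num.sqrt (A (ri i) (cj j)) == c i * q i j]].
  apply/eqP/forallP => [-> i | same]; first by apply/forallP => j; rewrite sqrtT.
  apply/matrixP => i j; case: (unliftP ord0 i) => [i'|] ->; last first.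
    by rewrite T1_row0; case: hA => _ -> _ _; case: hP1 => _ [_ -> _ _].
  case: (unliftP ord0 j) => [j'|] ->; last first.
    by rewrite T1_col0 (row_affine_corner hA) (row_affine_corner hP1.2).
  have /forallP/(_ j') := same i'.
  by rewrite -sqrtT eqr_sqrt // => /eqP.
apply: leif_sum => i _; apply: sum_sqrt_mul_leif => //; first exact: row_scale_gt0.
rewrite (row_affine_inner_sum hA) -(row_affine_inner_sum hT).
by apply: eq_bigr => j _; rewrite T1_inner best_replyE.
Qed.

End RowProblem.

Section Interior.
Variables (R : rcfType) (m n : nat) (a : 'I_m -> R) (b : 'I_n -> R) (Om : 'M[R]_(m, n)).
Hypotheses (a_gt0 : forall i, 0 < a i) (b_gt0 : forall j, 0 < b j).

Lemma inAt_rowsE P :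
  inAt a b Om P <-> row_feasible a Om P.1 /\ row_feasible b Om^T P.2^T.
Proof.
case: P => A B /=; split.
  case=> -[AB_ge0 row_sum row0 col_sum col0] zero_neg zero_top zero_corner.
  split; split.
  - by move=> i j; case: (AB_ge0 i j).
  - by split=> // i j /zero_neg [].
  - by move=> i j; rewrite mxE; case: (AB_ge0 j i).
  - split.
    + by move=> j; rewrite col_sum; apply: eq_bigr => i _; rewrite mxE.
    + by move=> i; rewrite mxE.
    + by move=> j i; rewrite !mxE => /zero_neg [].
    + by move=> j [i pos]; rewrite mxE; apply: zero_top; exists i; rewrite mxE in pos.
case=> -[A_ge0 [row_sum row0 zero_negA zero_corner]].
case=> B_ge0 [col_sum col0 zero_negB zero_top].
split; first split => //.
- by move=> i j; split; last by have := B_ge0 j i; rewrite mxE.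
- by move=> j; rewrite col_sum; apply: eq_bigr => i _; rewrite mxE.
- by move=> i; have := col0 i; rewrite mxE.
- move=> i j Om_le0; split; first exact: zero_negA.
  by have := zero_negB j i; rewrite !mxE; apply.
- by move=> j [i pos]; have := zero_top j; rewrite mxE; apply; exists i; rewrite mxE.
- exact: zero_corner.
Qed.

Lemma affhull_rows Y : affhull (inAt a b Om) Y ->
  row_affine a Om Y.1 /\ row_affine b Om^T Y.2^T.
Proof.
case=> k [p [w [Sp w_sum -> ->]]].
have feas l := (inAt_rowsE (p l)).1 (Sp l).
split; first by apply: row_affine_combination w_sum _ => l; case: (feas l) => -[].
rewrite linear_sum; under eq_bigr do rewrite linearZ.
by apply: row_affine_combination w_sum _ => l; case: (feas l) => _ [].
Qed.

Lemma interior_relint P : row_interior a Om P.1 -> row_interior b Om^T P.2^T ->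
  relint (inAt a b Om) P.
Proof.
move=> hA hB; split; first by apply/inAt_rowsE; split; [case: hA | case: hB].
have [e1 e1_gt0 near1] := row_interior_open (fun i => ltW (a_gt0 i)) hA.
have [e2 e2_gt0 near2] := row_interior_open (fun j => ltW (b_gt0 j)) hB.
exists (Num.min e1 e2); split=> [|Y /affhull_rows [Y1 Y2] near_P].
  by rewrite lt_min e1_gt0.
apply/inAt_rowsE; split.
  by apply: near1 Y1 _ => i j; case: (near_P i j) => + _; rewrite lt_min => /andP [].
by apply: near2 Y2 _ => i j; case: (near_P j i) => _; rewrite !mxE lt_min => /andP [].
Qed.

Lemma relint_interior P : relint (inAt a b Om) P ->
  row_interior a Om P.1 /\ row_interior b Om^T P.2^T.
Proof.
move=> relP; have /inAt_rowsE [hA hB] := relP.1.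
have [A' hA'] := exists_row_interior a_gt0 hA.
have [B' hB'] := exists_row_interior b_gt0 hB.
have SQ : inAt a b Om (A', B'^T).
  by apply/inAt_rowsE; rewrite /= trmxK; split; [case: hA' | case: hB'].
have [s s_gt0 /inAt_rowsE [ext1 ext2]] := relint_extend relP SQ.
rewrite /= linearB !linearZ /= trmxK scalerN in ext2.
split; first exact: row_interior_extend s_gt0 hA hA' ext1.
exact: row_interior_extend s_gt0 hB hB' ext2.
Qed.

Lemma relint_inAtE P : relint (inAt a b Om) P <->
  row_interior a Om P.1 /\ row_interior b Om^T P.2^T.
Proof. by split=> [/relint_interior | [/interior_relint]]. Qed.

End Interior.

Section Transpose.
Variables (R : rcfType) (m n : nat) (a : 'I_m -> R) (b : 'I_n -> R) (Om : 'M[R]_(m, n)).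

Lemma Fobj_trpair P : Fobj Om^T (trpair P) = Fobj Om P.
Proof.
rewrite /Fobj exchange_big /=; apply: eq_bigr => i _; apply: eq_bigr => j _.
by rewrite !mxE [P.2 _ _ * _]mulrC.
Qed.

Lemma T2_trpair P : T2 b Om P = trpair (T1 b Om^T (trpair P)).
Proof.
rewrite /trpair /= trmxK; congr (_, _); apply/matrixP => i j; rewrite !mxE.
case: (unliftP ord0 i) => [i'|] ->; case: (unliftP ord0 j) => [j'|] -> //=.
by under [in RHS]eq_bigr do rewrite !mxE; rewrite mxE.
Qed.

Lemma inAt_trpair P : inAt b a Om^T (trpair P) <-> inAt a b Om P.
Proof.
by split=> /inAt_rowsE [h1 h2]; apply/inAt_rowsE; rewrite /= ?trmxK in h1 h2 *.
Qed.

Hypotheses (a_gt0 : forall i, 0 < a i) (b_gt0 : forall j, 0 < b j).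

Lemma relint_trpair P : relint (inAt b a Om^T) (trpair P) <-> relint (inAt a b Om) P.
Proof.
split=> [/(relint_inAtE _ b_gt0 a_gt0) | /(relint_inAtE _ a_gt0 b_gt0)] [h1 h2].
  by apply/relint_inAtE; rewrite /= ?trmxK in h1 h2 *.
by apply/relint_inAtE; rewrite /= ?trmxK in h1 h2 *.
Qed.

End Transpose.

Section FirstUpdate.
Variables (R : rcfType) (m n : nat) (a : 'I_m -> R) (b : 'I_n -> R) (Om : 'M[R]_(m, n)).
Hypotheses (a_gt0 : forall i, 0 < a i) (b_gt0 : forall j, 0 < b j).

Lemma relint_support P : relint (inAt a b Om) P -> inner_support Om P.2.
Proof.
move=> /(relint_inAtE _ a_gt0 b_gt0) [_ /row_interior_support B_supp] i j.
by have := B_supp j i; rewrite !mxE.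
Qed.

Lemma relint_T1 P : relint (inAt a b Om) P -> relint (inAt a b Om) (T1 a Om P).
Proof.
move=> relP; have [[hA _] hB] := (relint_inAtE _ a_gt0 b_gt0 P).1 relP.
apply/relint_inAtE => //; split=> //.
exact: T1_row_interior a_gt0 hA (relint_support relP).
Qed.

Lemma argmax_T1 P : relint (inAt a b Om) P ->
  unique_argmax (fun Q => inAt a b Om Q /\ Q.2 = P.2) (Fobj Om) (T1 a Om P).
Proof.
move=> relP; have [[hA _] [hB _]] := (relint_inAtE _ a_gt0 b_gt0 P).1 relP.
have B_supp := relint_support relP.
have [[hT _] _] := (relint_inAtE _ a_gt0 b_gt0 _).1 (relint_T1 relP).
split; first by split; [apply/inAt_rowsE | ].
- by case=> A B [/inAt_rowsE [hA' _] /= ->]; apply: Fobj_T1_leif.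
- case=> A B [/inAt_rowsE [/= hA' _] /= ->] le_TA.
  have := ge_leif (Fobj_T1_leif a_gt0 hA B_supp hA').
  by rewrite le_TA => /esym/eqP ->.
Qed.

End FirstUpdate.

Section SecondUpdate.
Variables (R : rcfType) (m n : nat) (a : 'I_m -> R) (b : 'I_n -> R) (Om : 'M[R]_(m, n)).
Hypotheses (a_gt0 : forall i, 0 < a i) (b_gt0 : forall j, 0 < b j).

Lemma relint_T2 P : relint (inAt a b Om) P -> relint (inAt a b Om) (T2 b Om P).
Proof.
move=> relP; rewrite T2_trpair; apply/(relint_trpair _ a_gt0 b_gt0); rewrite trpairK.
by apply: relint_T1 => //; apply/(relint_trpair _ a_gt0 b_gt0).
Qed.

Lemma argmax_T2 P : relint (inAt a b Om) P ->
  unique_argmax (fun Q => inAt a b Om Q /\ Q.1 = P.1) (Fobj Om) (T2 b Om P).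
Proof.
move=> relP; rewrite T2_trpair.
apply: (unique_argmax_trpair (S := fun Q => inAt b a Om^T Q /\ Q.2 = (trpair P).2)
                             (F := Fobj Om^T)).
- move=> Q; split=> -[inQ eq1]; split; try exact/inAt_trpair.
    by rewrite /= eq1.
  exact: trmx_inj.
- by move=> Q; rewrite Fobj_trpair.
- by apply: argmax_T1 => //; apply/(relint_trpair _ a_gt0 b_gt0).
Qed.

End SecondUpdate.

Theorem lemma2p16 (R : rcfType) (m n : nat) (hm : (0 < m)%N) (hn : (0 < n)%N)
    (a : 'I_m -> R) (b : 'I_n -> R) (Om : 'M[R]_(m, n))
    (ha : forall i, 0 < a i) (hb : forall j, 0 < b j) :
  (forall P : mxpair R m n, relint (inAt a b Om) P ->
     relint (inAt a b Om) (T1 a Om P) /\ relint (inAt a b Om) (T2 b Om P)) /\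
  (forall P : mxpair R m n, relint (inAt a b Om) P ->
     unique_argmax (fun Q => inAt a b Om Q /\ Q.2 = P.2) (Fobj Om) (T1 a Om P) /\
     unique_argmax (fun Q => inAt a b Om Q /\ Q.1 = P.1) (Fobj Om) (T2 b Om P)).
Proof.
split=> P relP.
  by split; [apply: relint_T1 | apply: relint_T2].
by split; [apply: argmax_T1 | apply: argmax_T2].
Qed.
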